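(* Define $E_{0,n}(x)=1$ for all $n\ge0$, $E_{1,n}(x)=1+x$ for all $n\ge1$, and for $2\le k\le n$, $E_{k,n}(x)=\widetilde{E}^{\mathbf{s}}_{k-1}(x)$ with $\mathbf{s}=(n-k+2,\dots,n)$. Then for all $1\le k\le n$, \[E_{k,n}(x)=E_{k-1,n-1}(x)+x\sum_{j=0}^{k-1}\binom{n-1}{j}A_j(x)\,E_{k-1-j,n-1-j}(x).\]
   Context: For $\mathbf{s}=(s_1,\dots,s_m)\in\mathbb{Z}_{>0}^m$ let $\mathcal{I}^{\mathbf{s}}_m=\{\mathbf{e}\in\mathbb{Z}^m:0\le e_i<s_i\}$, with $e_0=e_{m+1}=0$, $s_0=s_{m+1}=1$; $i\in\{0,\dots,m\}$ is an ascent if $e_i/s_i<e_{i+1}/s_{i+1}$ and a collision if $e_i/s_i=e_{i+1}/s_{i+1}$; $\widetilde{E}^{\mathbf{s}}_m(x)=\sum_{\mathbf{e}\in\mathcal{I}^{\mathbf{s}}_m}(1+x)^{\mathrm{col}(\mathbf{e})}x^{\mathrm{asc}(\mathbf{e})}$. Eulerian polynomials: $A_0(x)=1$, $A_n(x)=\sum_{\sigma\in\mathfrak{S}_n}x^{\mathrm{des}(\sigma)}$ for $n\ge1$, $\mathrm{des}(\sigma)=|\{i\in[n-1]:\sigma_i>\sigma_{i+1}\}|$. *)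

From HB Require Import structures.
From mathcomp Require Import all_boot all_order perm all_algebra.
Set Implicit Arguments. Unset Strict Implicit. Unset Printing Implicit Defensive.
Import Order.TTheory GRing.Theory Num.Theory.
Local Open Scope ring_scope.

Fixpoint invseqs (s : seq nat) : seq (seq nat) :=
  match s with
  | [::] => [:: [::]]
  | si :: s' => flatten [seq [seq i :: e | e <- invseqs s'] | i <- iota 0 si]
  end.

Definition padE (e : seq nat) : seq nat := 0%N :: rcons e 0%N.
Definition padS (s : seq nat) : seq nat := 1%N :: rcons s 1%N.

Definition ratio (s e : seq nat) (i : nat) : rat :=
  (nth 0%N (padE e) i)%:R / (nth 1%N (padS s) i)%:R.

Definition asc (s e : seq nat) : nat :=
  count (fun i => ratio s e i < ratio s e i.+1) (iota 0 (size s).+1).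
Definition col (s e : seq nat) : nat :=
  count (fun i => ratio s e i == ratio s e i.+1) (iota 0 (size s).+1).

Definition Etilde (s : seq nat) : {poly int} :=
  \sum_(e <- invseqs s) ((1 + 'X) ^+ col s e * 'X ^+ asc s e).

Definition des (n : nat) (sigma : 'S_n) : nat :=
  let w := [seq val (sigma i) | i <- enum 'I_n] in
  count (fun i => nth 0%N w i.+1 < nth 0%N w i)%N (iota 0 n.-1).

Definition Eulerian (n : nat) : {poly int} :=
  if n == 0%N then 1 else \sum_(sigma : 'S_n) 'X ^+ des sigma.

Definition Ekn (k n : nat) : {poly int} :=
  if k == 0%N then 1
  else if k == 1%N then 1 + 'X
  else Etilde (iota (n - k + 2) k.-1).

(* Put b = n - k + 1, so that s = (b + 1, ..., b + k - 1) has consecutive entries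
   differing by one.  For such s and e in I^s, e_i / s_i < e_(i+1) / s_(i+1) iff
   e_i < e_(i+1), and a collision only occurs between two zero entries; hence
   E_(k,n) is a sum over the walks 0, e_1, ..., e_(k-1), 0 of products of step
   weights (1 + x)^[a = c = 0] x^[a < c], and a transfer recursion in the length
   of the walk applies.  A walk either ends with the step 0 -> 0, which gives
   (1 + x) E_(k-1,n-1), or it ends with an ascent from its last zero followed by
   j positive entries.  Summed over all endpoints, the positive tails of length j
   contribute C(n-1, j+1) A_(j+1)(x): refining A_(j+1) by the last letter of the
   permutation, the generating function of the tails ending at a given value is
   a binomial combination of these refined Eulerian polynomials, and a
   Chu-Vandermonde type identity reassembles the sum. *)

From Pilot Require Import Defs.
From HB Require Import structures.
From mathcomp Require Import all_boot all_order perm all_algebra.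
From mathcomp Require Import ring zify.
Set Implicit Arguments. Unset Strict Implicit. Unset Printing Implicit Defensive.
Import GRing.Theory Num.Theory.

Lemma sum_bin_mul_ltn b c L v : v <= L ->
  \sum_(u < v) 'C(u, b) * 'C(L.-1 - u, c) =
  \sum_(t < c.+1) 'C(v, b.+1 + t) * 'C(L - v, c - t).
Proof.
elim: v => [|v IHv] lt_vL.
  by rewrite big_ord0 big1 // => t _; rewrite bin0n addSn.
rewrite big_ord_recr /= IHv ?(ltnW lt_vL) //.
have -> : L - v = (L - v.+1).+1 by lia.
have -> : L.-1 - v = L - v.+1 by lia.
set w := L - v.+1.
rewrite [RHS](eq_bigr (fun t : 'I_c.+1 =>
  'C(v, b.+1 + t) * 'C(w, c - t) + 'C(v, b + t) * 'C(w, c - t))); last first.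
  by move=> t _; rewrite addSn binS mulnDl.
rewrite big_split /= [X in _ = _ + X]big_ord_recl /= addn0 subn0.
rewrite big_ord_recr /= subnn bin0 muln1.
rewrite (eq_bigr (fun t : 'I_c =>
  'C(v, b.+1 + t) * 'C(w, c - t) + 'C(v, b + bump 0 t) * 'C(w, c - bump 0 t))).
  by rewrite big_split /= [in RHS]big_ord_recr /= subnn bin0 muln1; ring.
move=> t _; rewrite /bump /= add1n addnS -addSn.
have -> : c - t = (c - t.+1).+1 by move: (ltn_ord t); lia.
by rewrite binS mulnDr; congr (_ + _); rewrite subnSK.
Qed.

Lemma sum_bin_mul_geq b c L v : v <= L ->
  \sum_(v <= u < L) 'C(u, b) * 'C(L.-1 - u, c) =
  \sum_(a < b.+1) 'C(v, a) * 'C(L - v, b + c.+1 - a).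
Proof.
move Ed : (L - v) => d; elim: d v Ed => [|d IHd] v Ed le_vL.
  have -> : v = L by lia.
  rewrite big_geq // big1 // => a _.
  by rewrite bin0n (_ : b + c.+1 - a == 0 = false) ?muln0 //; move: (ltn_ord a); lia.
rewrite big_ltn; last by lia.
rewrite IHd; [|lia|lia].
have -> : L.-1 - v = d by lia.
rewrite [RHS](eq_bigr (fun a : 'I_b.+1 =>
  'C(v, a) * 'C(d, (b + c - a).+1) + 'C(v, a) * 'C(d, b + c - a))); last first.
  move=> a _; have -> : b + c.+1 - a = (b + c - a).+1 by move: (ltn_ord a); lia.
  by rewrite binS mulnDr.
rewrite big_split /= [X in _ = X + _]big_ord_recl [X in _ = _ + X]big_ord_recr.
rewrite /= bin0 mul1n subn0 addnS addKn.
rewrite [in RHS](eq_bigr (fun a : 'I_b => 'C(v, bump 0 a) * 'C(d, b + c - a))); last first.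
  by move=> a _; rewrite /bump /= add1n subnSK // ltn_addr.
rewrite [in LHS]big_ord_recl /= bin0 mul1n subn0.
rewrite [in LHS](eq_bigr (fun a : 'I_b =>
  'C(v, bump 0 a) * 'C(d, b + c - a) + 'C(v, a) * 'C(d, b + c - a))); last first.
  by move=> a _; rewrite /bump /= add1n binS mulnDl.
by rewrite big_split /=; ring.
Qed.

Lemma sum_bin_mul a c N :
  \sum_(u < N) 'C(u, a) * 'C(N.-1 - u, c) = 'C(N, a + c.+1).
Proof.
rewrite sum_bin_mul_ltn // subnn big_ord_recr /= subnn bin0 muln1 addSnnS.
rewrite big1 // => t _; rewrite bin0n (_ : c - t == 0 = false) ?muln0 //.
by move: (ltn_ord t); lia.
Qed.

Local Open Scope ring_scope.

Section BinomialWeights.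

Variables (R : comPzRingType) (x : R).

Lemma sum_expr_ltn (f : nat -> nat) n v : (v <= n)%N ->
  \sum_(u < n) (f u)%:R * x ^+ (u < v)%N =
  x * (\sum_(u < v) f u)%:R + (\sum_(v <= u < n) f u)%:R.
Proof.
move=> le_vn; rewrite -(big_mkord xpredT (fun u => (f u)%:R * x ^+ (u < v)%N)).
rewrite (@big_cat_nat _ _ _ v) //=.
rewrite !natr_sum mulr_sumr big_mkord; congr (_ + _).
  by apply: eq_bigr => u _; rewrite ltn_ord mulrC.
by apply: eq_big_nat => u /andP[le_vu _]; rewrite ltnNge le_vu mulr1.
Qed.

Lemma sum_expr_gtn (g : nat -> nat) n b : (b < n)%N ->
  \sum_(a < n) (g a)%:R * x ^+ (b < a)%N =
  (\sum_(a < b.+1) g a)%:R + x * (\sum_(b.+1 <= a < n) g a)%:R.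
Proof.
move=> lt_bn; rewrite -(big_mkord xpredT (fun a => (g a)%:R * x ^+ (b < a)%N)).
rewrite (@big_cat_nat _ _ _ b.+1) //=.
rewrite !natr_sum mulr_sumr big_mkord; congr (_ + _).
  by apply: eq_bigr => a _; rewrite ltnNge -ltnS ltn_ord mulr1.
by apply: eq_big_nat => a /andP[lt_ba _]; rewrite lt_ba mulrC.
Qed.

Lemma sum_bin_expr_swap L j b v : (b <= j)%N -> (v <= L)%N ->
  \sum_(u < L) ('C(u, b) * 'C(L.-1 - u, j - b))%:R * x ^+ (u < v)%N =
  \sum_(a < j.+2) ('C(v, a) * 'C(L - v, j.+1 - a))%:R * x ^+ (b < a)%N.
Proof.
move=> le_bj le_vL.
rewrite (sum_expr_ltn (fun u => 'C(u, b) * 'C(L.-1 - u, j - b))%N) //.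
rewrite (sum_expr_gtn (fun a => 'C(v, a) * 'C(L - v, j.+1 - a))%N); last by rewrite ltnS leqW.
rewrite sum_bin_mul_ltn // sum_bin_mul_geq //.
rewrite addrC; congr (_%:R + x * _%:R).
  by apply: eq_bigr => a _; congr (_ * 'C(_, _)); lia.
rewrite -[b.+1 in RHS]add0n big_addn subSS subSn // big_mkord.
by apply: eq_bigr => t _; rewrite addnC; congr (_ * 'C(_, _)); lia.
Qed.

End BinomialWeights.

Section UnliftPerm.

Variables (n : nat) (i : 'I_n.+1).

Definition unlift_perm_fun (sg : 'S_n.+1) (k : 'I_n) : 'I_n :=
  odflt k (unlift (sg i) (sg (lift i k))).

Lemma unlift_perm_funK (sg : 'S_n.+1) k :
  lift (sg i) (unlift_perm_fun sg k) = sg (lift i k).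
Proof.
have : sg i != sg (lift i k) by rewrite (inj_eq perm_inj) neq_lift.
by rewrite /unlift_perm_fun => /unlift_some[k' -> ->].
Qed.

Lemma unlift_perm_fun_inj (sg : 'S_n.+1) : injective (unlift_perm_fun sg).
Proof.
move=> k1 k2 /(congr1 (lift (sg i))); rewrite !unlift_perm_funK.
by move/perm_inj/lift_inj.
Qed.

Definition unlift_perm (sg : 'S_n.+1) : 'S_n := perm (@unlift_perm_fun_inj sg).

Lemma lift_unlift_perm (sg : 'S_n.+1) : lift_perm i (sg i) (unlift_perm sg) = sg.
Proof.
apply/permP => k; case: (unliftP i k) => [k'|] ->; last by rewrite lift_perm_id.
by rewrite lift_perm_lift permE unlift_perm_funK.
Qed.

Lemma unlift_lift_perm j (s : 'S_n) : unlift_perm (lift_perm i j s) = s.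
Proof.
apply/permP => k; apply: (@lift_inj _ j); rewrite permE.
by have := unlift_perm_funK (lift_perm i j s) k; rewrite lift_perm_id lift_perm_lift.
Qed.

Lemma sum_perm_fixed (V : nmodType) j (F : 'S_n.+1 -> V) :
  \sum_(sg : 'S_n.+1 | sg i == j) F sg = \sum_(s : 'S_n) F (lift_perm i j s).
Proof.
rewrite (reindex (lift_perm i j)); last first.
  by exists unlift_perm => [s _ | sg /eqP <-]; rewrite ?unlift_lift_perm ?lift_unlift_perm.
by apply: eq_bigl => s; rewrite lift_perm_id eqxx.
Qed.

End UnliftPerm.

Lemma desE n (s : 'S_n.+1) :
  des s = count (fun i => s (inord i.+1) < s (inord i))%N (iota 0 n).
Proof.
apply: eq_in_count => i; rewrite mem_iota add0n => /andP[_ lt_in].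
have nthE k : (k < n.+1)%N ->
    nth 0%N [seq val (s i) | i <- enum 'I_n.+1] k = s (inord k).
  move=> lt_kn; rewrite (nth_map ord0) ?size_enum_ord //; congr (val (s _)).
  by apply: val_inj; rewrite /= nth_enum_ord // inordK.
by rewrite !nthE // ltnW.
Qed.

Lemma ltn_bump h m n : (bump h m < bump h n)%N = (m < n)%N.
Proof. by rewrite /bump; case: (leqP h m); case: (leqP h n) => /= *; lia. Qed.

Lemma des_lift_perm j (v : 'I_j.+2) (s : 'S_j.+1) :
  des (lift_perm ord_max v s) = (des s + (v <= s ord_max))%N.
Proof.
have inordE i : (i <= j)%N -> inord i = lift ord_max (inord i : 'I_j.+1).
  by move=> le_ij; apply: val_inj; rewrite /= /bump !inordK //; case: leqP => /= *; lia.
rewrite !desE -[in iota 0 j.+1]addn1 iotaD cats1 -cats1 count_cat /= addn0.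
congr (_ + _)%N.
  apply: eq_in_count => i; rewrite mem_iota add0n => /andP[_ lt_ij].
  by rewrite !inordE ?(ltnW lt_ij) // !lift_perm_lift /= ltn_bump.
have -> : (inord j.+1 : 'I_j.+2) = ord_max by apply: val_inj; rewrite /= inordK.
rewrite lift_perm_id inordE // lift_perm_lift.
have -> : (inord j : 'I_j.+1) = ord_max by apply: val_inj; rewrite /= inordK.
by rewrite /= /bump; case: (leqP v (s ord_max)) => /= *; lia.
Qed.

Definition Eulerian_last (j a : nat) : {poly int} :=
  \sum_(s : 'S_j.+1 | (j - s ord_max == a)%N) 'X ^+ des s.

Lemma Eulerian_lastE j : Eulerian j.+1 = \sum_(a < j.+1) Eulerian_last j a.
Proof.
by rewrite /Eulerian (partition_big (fun s : 'S_j.+1 => rev_ord (s ord_max)) xpredT).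
Qed.

Lemma Eulerian_last0 a : Eulerian_last 0 a = (a == 0)%N%:R.
Proof.
rewrite /Eulerian_last (eq_bigl (fun=> a == 0)%N) => [|s]; last by rewrite sub0n eq_sym.
case: eqP => _; last by rewrite big_pred0.
by rewrite (eq_bigr (fun=> 1)) ?sumr_const ?card_Sn.
Qed.

Lemma Eulerian_lastS j a : (a <= j.+1)%N ->
  Eulerian_last j.+1 a = \sum_(b < j.+1) Eulerian_last j b * 'X ^+ (b < a)%N.
Proof.
move=> le_aj.
pose v : 'I_j.+2 := inord (j.+1 - a).
have -> : \sum_(b < j.+1) Eulerian_last j b * 'X ^+ (b < a)%N =
          \sum_(s : 'S_j.+1) 'X ^+ des s * 'X ^+ (j - s ord_max < a)%N.
  rewrite (partition_big (fun s : 'S_j.+1 => rev_ord (s ord_max)) xpredT) //=.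
  apply: eq_bigr => b _; rewrite big_distrl /=.
  by apply: eq_big => [s | s /eqP <-]; rewrite -?val_eqE.
rewrite /Eulerian_last (eq_bigl (fun sg : 'S_j.+2 => sg ord_max == v)); last first.
  move=> sg; rewrite -val_eqE /= inordK ?ltnS ?leq_subr //.
  by have := ltn_ord (sg ord_max); lia.
rewrite sum_perm_fixed; apply: eq_bigr => s _.
rewrite des_lift_perm exprD /= inordK ?ltnS ?leq_subr //.
by congr (_ * _ ^+ nat_of_bool _); have := ltn_ord (s ord_max); lia.
Qed.

(* The weight x^asc of the sequences u_1, ..., u_j, v with u_i < N - 1 - j + i:
   the positive tail of a walk, shifted down by one (see walks_to_gt0). *)
Fixpoint pos_walks (N j v : nat) {struct j} : {poly int} :=
  if j is j'.+1 then \sum_(u < N.-1) pos_walks N.-1 j' u * 'X ^+ (u < v)%N else 1.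

Definition pos_walks_all (N j : nat) : {poly int} := \sum_(v < N) pos_walks N j v.

Lemma pos_walksE j N v : (v < N)%N ->
  pos_walks N j v =
  \sum_(a < j.+1) ('C(v, a) * 'C(N.-1 - v, j - a))%:R * Eulerian_last j a.
Proof.
elim: j N v => [|j IHj] N v lt_vN.
  by rewrite /= big_ord1 Eulerian_last0 !bin0 mulr1.
rewrite /=; under eq_bigr => u _ do rewrite IHj ?ltn_ord // big_distrl.
under [RHS]eq_bigr => a _ do rewrite (@Eulerian_lastS j a (ltn_ord a)) mulr_sumr.
rewrite exchange_big [RHS]exchange_big /=; apply: eq_bigr => b _.
have le_vN : (v <= N.-1)%N by rewrite -ltnS (leq_trans lt_vN) ?leqSpred.
transitivity (Eulerian_last j b *
  \sum_(u < N.-1) ('C(u, b) * 'C(N.-2 - u, j - b))%:R * 'X ^+ (u < v)%N).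
  by rewrite mulr_sumr; apply: eq_bigr => u _; ring.
rewrite sum_bin_expr_swap //; last by rewrite -ltnS.
under [RHS]eq_bigr => a _ do rewrite mulrCA.
by rewrite -mulr_sumr.
Qed.

Lemma pos_walks_allE N j : (j < N)%N ->
  pos_walks_all N j = 'C(N, j.+1)%:R * Eulerian j.+1.
Proof.
move=> lt_jN; rewrite /pos_walks_all.
under eq_bigr => v _ do rewrite pos_walksE //.
rewrite exchange_big /= Eulerian_lastE mulr_sumr; apply: eq_bigr => a _.
rewrite -mulr_suml -natr_sum sum_bin_mul; congr (_%:R * _).
by congr 'C(_, _); have := ltn_ord a; lia.
Qed.

Lemma mem_invseqs s e : e \in invseqs s ->
  size e = size s /\ forall i, (i < size s)%N -> (nth 0%N e i < nth 0%N s i)%N.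
Proof.
elim: s e => [|x s IHs] e /=; first by rewrite inE => /eqP ->.
case/flatten_mapP => i; rewrite mem_iota add0n => /andP[_ lt_ix].
case/mapP => e' /IHs[size_e' lt_e'] ->.
by split=> [|[|k]] //=; [rewrite size_e' | apply: lt_e'].
Qed.

Lemma nth_padE e i : nth 0%N (padE e) i = if i is i'.+1 then nth 0%N e i' else 0%N.
Proof. by case: i => //= i; rewrite nth_rcons_default. Qed.

Lemma nth_padS s i : nth 1%N (padS s) i = if i is i'.+1 then nth 1%N s i' else 1%N.
Proof. by case: i => //= i; rewrite nth_rcons_default. Qed.

Lemma ratio_succ_cmp (a c sa sc : nat) : (a < sa)%N -> (c < sc)%N ->
  [\/ a = 0, c = 0 | sc = sa.+1]%N ->
  (((a%:R / sa%:R < c%:R / sc%:R :> rat) = (a < c)%N) *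
   ((a%:R / sa%:R == c%:R / sc%:R :> rat) = ((a == 0) && (c == 0))%N)).
Proof.
move=> lt_a lt_c cases.
have sa_gt0 : (0 : rat) < sa%:R by rewrite ltr0n (leq_ltn_trans (leq0n a)).
have sc_gt0 : (0 : rat) < sc%:R by rewrite ltr0n (leq_ltn_trans (leq0n c)).
split.
  rewrite ltr_pdivrMr // mulrAC ltr_pdivlMr // -!natrM ltr_nat.
  by apply/idP/idP => ?; case: cases => ?; case: (leqP c a) => ?; nia.
rewrite eqr_div ?lt0r_neq0 // -!natrM eqr_nat.
apply/idP/idP => [/eqP ?|/andP[/eqP-> /eqP->]]; last by rewrite !mul0n.
by have [-> ->] : a = 0%N /\ c = 0%N by case: cases => ?; case: (leqP c a) => ?; nia.
Qed.

Lemma ratio_padE b m e i : e \in invseqs (iota b.+1 m) ->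
  let s := iota b.+1 m in
  (((Defs.ratio s e i < Defs.ratio s e i.+1) = (nth 0 (padE e) i < nth 0 (padE e) i.+1)%N) *
   ((Defs.ratio s e i == Defs.ratio s e i.+1) =
      ((nth 0 (padE e) i == 0) && (nth 0 (padE e) i.+1 == 0))%N)).
Proof.
move=> /mem_invseqs[]; rewrite size_iota => size_e lt_e s.
have lt_pad k : (nth 0 (padE e) k < nth 1 (padS s) k)%N.
  rewrite nth_padE nth_padS; case: k => // k.
  have [lt_km|le_mk] := ltnP k m; first by have := lt_e k lt_km; rewrite /s !nth_iota.
  by rewrite !nth_default ?size_iota ?size_e.
apply: ratio_succ_cmp => //; rewrite !nth_padE !nth_padS; case: i => [|i]; first exact: Or31.
have [lt_im|le_mi] := ltnP i.+1 m.
  by apply: Or33; rewrite !nth_iota ?addnS // ltnW.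
by apply: Or32; rewrite nth_default ?size_e.
Qed.

Definition step_weight (a c : nat) : {poly int} :=
  (1 + 'X) ^+ ((a == 0) && (c == 0))%N * 'X ^+ (a < c)%N.

Fixpoint walk_weight (a : nat) (l : seq nat) : {poly int} :=
  if l is c :: l' then step_weight a c * walk_weight c l' else 1.

Lemma walk_weightE a l : walk_weight a l =
  \prod_(i <- iota 0 (size l)) step_weight (nth 0 (a :: l) i) (nth 0 (a :: l) i.+1).
Proof.
elim: l a => [|c l IHl] a /=; first by rewrite big_nil.
by rewrite big_cons IHl -(addn0 1%N) iotaDl big_map.
Qed.

Lemma walk_weight_rcons a l c :
  walk_weight a (rcons l c) = walk_weight a l * step_weight (last a l) c.
Proof. by elim: l a => [|d l IHl] a /=; rewrite ?mul1r ?mulr1 // IHl mulrA. Qed.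

Lemma prod_exprs_count (R : comPzRingType) (x y : R) T (p q : pred T) (l : seq T) :
  x ^+ count p l * y ^+ count q l = \prod_(i <- l) (x ^+ p i * y ^+ q i).
Proof.
elim: l => [|i l IHl] /=; first by rewrite big_nil mulr1.
by rewrite big_cons -IHl !exprD; ring.
Qed.

Definition walks_to (b m c : nat) : {poly int} :=
  \sum_(e <- invseqs (iota b.+1 m)) walk_weight 0 (rcons e c).

Lemma Etilde_walks b m : Etilde (iota b.+1 m) = walks_to b m 0.
Proof.
apply: eq_big_seq => e e_in.
have [size_e _] := mem_invseqs e_in.
rewrite /col /asc prod_exprs_count walk_weightE size_rcons size_e.
by apply: eq_bigr => i _; rewrite /step_weight !(ratio_padE i e_in).
Qed.

Lemma sum_invseqs_cons (V : nmodType) (F : seq nat -> V) si s :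
  \sum_(e <- invseqs (si :: s)) F e =
  \sum_(i <- iota 0 si) \sum_(e <- invseqs s) F (i :: e).
Proof. exact: big_allpairs_dep. Qed.

Lemma sum_invseqs_rcons (V : nmodType) (F : seq nat -> V) s t :
  \sum_(e <- invseqs (rcons s t)) F e = \sum_(e <- invseqs s) \sum_(i < t) F (rcons e i).
Proof.
elim: s F => [|x s IHs] F; last first.
  by rewrite /= !sum_invseqs_cons; apply: eq_bigr => i _; rewrite IHs.
rewrite sum_invseqs_cons /= big_seq1.
have -> : iota 0 t = index_iota 0 t by rewrite /index_iota subn0.
by rewrite big_mkord; apply: eq_bigr => i _; rewrite big_seq1.
Qed.

Lemma walks_to0 b c : walks_to b 0 c = step_weight 0 c.
Proof. by rewrite /walks_to big_seq1 /= mulr1. Qed.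

Lemma walks_toS b m c :
  walks_to b m.+1 c = \sum_(i < b + m.+1) walks_to b m i * step_weight i c.
Proof.
rewrite /walks_to -[m.+1]addn1 iotaD cats1 sum_invseqs_rcons exchange_big /= addSnnS addn1.
apply: eq_bigr => i _; rewrite big_distrl /=.
by apply: eq_bigr => e _; rewrite walk_weight_rcons last_rcons.
Qed.

Definition Eseq (b m : nat) : {poly int} := if m is m'.+1 then walks_to b m' 0 else 1.

Lemma walks_to_gt0 b m c : (0 < c)%N ->
  walks_to b m c = 'X * \sum_(j < m.+1) Eseq b (m - j) * pos_walks (b + m) j c.-1.
Proof.
case: c => // c _; elim: m c => [|m IHm] c.
  by rewrite walks_to0 big_ord1 /step_weight /= expr0 !mul1r !mulr1.
rewrite walks_toS addnS big_ord_recl big_ord_recl /= mulr1 mulrDr.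
rewrite /step_weight /= expr0 expr1 mul1r mulrC; congr (_ + _).
under eq_bigr => u _ do rewrite IHm mul1r -mulrA mulr_suml.
rewrite -mulr_sumr exchange_big; congr (_ * _); apply: eq_bigr => j _ /=.
by rewrite mulr_sumr; apply: eq_bigr => u _; rewrite mulrA.
Qed.

Lemma walks_to_eq0 b m : walks_to b m.+1 0 =
  (1 + 'X) * Eseq b m.+1 + 'X * \sum_(j < m.+1) Eseq b (m - j) * pos_walks_all (b + m) j.
Proof.
rewrite walks_toS addnS big_ord_recl /step_weight /= expr1 expr0 !mulr1 mulrC.
congr (_ + _); under eq_bigr => u _ do rewrite walks_to_gt0 // /bump /= mulr1.
rewrite -mulr_sumr exchange_big /=; congr (_ * _); apply: eq_bigr => j _.
by rewrite /pos_walks_all mulr_sumr.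
Qed.

Lemma Ekn_Eseq k n : (k <= n)%N -> Ekn k n = Eseq (n - k).+1 k.
Proof.
rewrite /Ekn; case: k => [|[|k]] le_kn //=; first by rewrite walks_to0 /step_weight /= mulr1.
by rewrite -Etilde_walks /=; congr (Etilde (_ :: iota _ _)); lia.
Qed.

Theorem lemmaB1 (k n : nat) :
  (1 <= k)%N -> (k <= n)%N ->
  Ekn k n = Ekn k.-1 n.-1 +
    'X * \sum_(j < k) ('C(n.-1, j)%:R * Eulerian j * Ekn (k.-1 - j) (n.-1 - j)).
Proof.
case: k => [|[|m]] // _ le_kn.
  by rewrite /Ekn /= big_ord1 /Eulerian /= bin0 !mulr1.
have [b b_gt0 nE] : exists2 b, (0 < b)%N & n = (b + m.+1)%N by exists (n - m.+1)%N; lia.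
have EknE j : Ekn (m.+1 - j) (n.-1 - j) = Eseq b (m.+1 - j).
  have [le_jm|lt_mj] := leqP j m.+1; last by rewrite (_ : m.+1 - j = 0)%N //; lia.
  by rewrite Ekn_Eseq; [congr Eseq|]; lia.
have termE (j : 'I_m.+1) : 'C(n.-1, j.+1)%:R * Eulerian j.+1 * Eseq b (m.+1 - j.+1) =
                           Eseq b (m - j) * pos_walks_all (b + m) j.
  have lt_jm := ltn_ord j.
  rewrite pos_walks_allE; last by lia.
  by rewrite (_ : (b + m)%N = n.-1) 1?subSS 1?mulrC //; lia.
rewrite Ekn_Eseq // (_ : (n - m.+2).+1 = b); last by lia.
under [in RHS]eq_bigr => j _ do rewrite EknE.
rewrite [in RHS]big_ord_recl (eq_bigr _ (fun j _ => termE j)) bin0.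
have := EknE 0%N; rewrite !subn0 => ->.
rewrite (_ : Eseq b m.+2 = walks_to b m.+1 0) // walks_to_eq0 (_ : Eulerian 0 = 1) //.
by ring.
Qed.
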